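(* Let $n\ge 1$ and $0\le t<n$ be integers, and write $n=(n-t)q+r$ where $q,r$ are the unique integers with $0\le r<n-t$. Then \[ S(n,t,2)=q^{\,n-t-r}(q+1)^r. \]
   Context: A CNF formula over variables $x_1,\dots,x_n$ is a conjunction of clauses (disjunctions of literals); a $k$-CNF has all clauses of width at most $k$. $\mathrm{sat}_t(F)$ denotes the set of satisfying assignments of $F$ of Hamming weight exactly $t$. $F$ is $t$-admissible if it has no satisfying assignment of Hamming weight less than $t$. $S(n,t,k)$ is the maximum of $|\mathrm{sat}_t(F)|$ over all $t$-admissible $k$-CNF formulas $F$ on $n$ variables. *)

From mathcomp Require Import all_boot all_order.
Set Implicit Arguments. Unset Strict Implicit. Unset Printing Implicit Defensive.

(* A literal is a pair (i, b): (i, true) is x_i, (i, false) is its negation.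
   An assignment is the set of variables set to true; its Hamming weight is
   its cardinality. *)
Definition literal (n : nat) := ('I_n * bool)%type.
Definition clause (n : nat) := {set literal n}.
Definition cnf (n : nat) := {set clause n}.
Definition assignment (n : nat) := {set 'I_n}.

Definition lit_sat n (a : assignment n) (l : literal n) : bool :=
  (l.1 \in a) == l.2.
Definition clause_sat n (a : assignment n) (C : clause n) : bool :=
  [exists l in C, lit_sat a l].
Definition cnf_sat n (a : assignment n) (F : cnf n) : bool :=
  [forall C in F, clause_sat a C].

Definition is_kcnf n (k : nat) (F : cnf n) : bool :=
  [forall C in F, #|C| <= k].

Definition sat_t n (t : nat) (F : cnf n) : {set assignment n} :=
  [set a : assignment n | (#|a| == t) && cnf_sat a F].

Definition admissible n (t : nat) (F : cnf n) : bool :=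
  [forall a : assignment n, cnf_sat a F ==> (t <= #|a|)].

(* S(n,t,k): maximum of |sat_t(F)| over t-admissible k-CNFs on n variables
   (the set of such F is finite and nonempty: {empty clause} qualifies). *)
Definition Smax (n t k : nat) : nat :=
  \max_(F : cnf n | admissible t F && is_kcnf k F) #|sat_t t F|.

From mathcomp Require Import all_boot all_order.
From mathcomp Require Import zify ring.
Set Implicit Arguments. Unset Strict Implicit. Unset Printing Implicit Defensive.

(* Let m = n - t.  Solutions of a 2-CNF are closed under the coordinatewise
   majority (median) of three solutions; hence, in the graph joining two
   variables when some solution falsifies both, every clique is falsified by a
   single solution (a Helly property).  For a t-admissible F this graph has no
   (m+1)-clique, while the false sets of weight-t solutions are m-cliques.
   Zykov's symmetrization bounds the number of m-cliques of a graph on n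
   vertices without (m+1)-cliques by the largest product of m naturals of sum
   n, which a discrete AM-GM inequality evaluates to q^(m-r) (q+1)^r.
   Conversely, the clauses x_i \/ x_j for i = j (mod m) allow at most one false
   variable per residue class, and picking one in each class attains the bound. *)

(* [max_prod m n] is the largest product of [m] naturals of sum at most [n]. *)
Fixpoint max_prod (m n : nat) : nat :=
  if m is m'.+1 then \max_(b < n.+1) (b * max_prod m' (n - b)) else 1.

Lemma leq_max_prod m n n' : n <= n' -> max_prod m n <= max_prod m n'.
Proof.
elim: m n n' => [//|m IHm] n n' lenn' /=.
apply/bigmax_leqP => b _.
have ltbn' : b < n'.+1 by rewrite ltnS (leq_trans _ lenn') // -ltnS.
apply: leq_trans (leq_bigmax (Ordinal ltbn')) => /=.
by rewrite leq_mul2l IHm ?orbT // leq_sub2r.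
Qed.

Lemma max_prodS_ge m n d : d <= n -> (n - d) * max_prod m d <= max_prod m.+1 n.
Proof.
move=> ledn /=.
have ltb : n - d < n.+1 by rewrite ltnS leq_subr.
by apply: leq_trans (leq_bigmax (Ordinal ltb)); rewrite /= subKn.
Qed.

Lemma max_prod_witness m n :
  exists s, [/\ size s = m, sumn s <= n & max_prod m n = \prod_(x <- s) x].
Proof.
elim: m n => [|m IHm] n; first by exists [::]; rewrite big_nil.
have n1_gt0 : 0 < #|'I_n.+1| by rewrite card_ord.
have [b /= ->] := eq_bigmax (fun b : 'I_n.+1 => b * max_prod m (n - b)) n1_gt0.
have [s [<- sum_s ->]] := IHm (n - b).
exists (val b :: s); split; rewrite ?big_cons //=.
by have := ltn_ord b; lia.
Qed.

Lemma bernoulli_ge q k : (q + k) * q ^ k <= q * q.+1 ^ k.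
Proof.
elim: k => [|k IHk]; first by rewrite addn0 !expn0.
by rewrite !expnS; move: IHk; move: (q ^ k) (q.+1 ^ k) => y z; nia.
Qed.

Lemma bernoulli_le q k : (q - k) * q.+1 ^ k <= q ^ k.+1.
Proof.
elim: k => [|k IHk]; first by rewrite subn0 expn0 expn1 muln1.
by rewrite expnS [q ^ k.+2]expnS; move: IHk; move: (q ^ k.+1) (q.+1 ^ k) => y z; nia.
Qed.

(* [x / q <= ((q + 1) / q) ^ (x - q)] with denominators cleared. *)
Lemma balanced_factor q x : x * q ^ x * q.+1 ^ q <= q.+1 ^ x * q ^ q.+1.
Proof.
have [/subnKC <-|/ltnW/subnKC <-] := leqP q x; set k := (_ - _).
  apply: leq_trans (_ : (q + k) * q ^ k * (q ^ q * q.+1 ^ q) <= _).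
    by rewrite !expnD eq_leq //; ring.
  apply: leq_trans (leq_mul (bernoulli_ge q k) (leqnn _)) _.
  by rewrite !expnD expnS eq_leq //; ring.
apply: leq_trans (_ : (x + k - k) * (x + k).+1 ^ k * ((x + k) ^ x * (x + k).+1 ^ x) <= _).
  by rewrite addnK expnD eq_leq //; ring.
apply: leq_trans (leq_mul (bernoulli_le (x + k) k) (leqnn _)) _.
by rewrite !expnS expnD eq_leq //; ring.
Qed.

Lemma prod_balanced_factor q (s : seq nat) :
  \prod_(x <- s) x * q ^ sumn s * q.+1 ^ (size s * q)
  <= q.+1 ^ sumn s * q ^ (size s * q.+1).
Proof.
elim: s => [|x s IHs] /=; first by rewrite big_nil.
apply: leq_trans (_ : x * q ^ x * q.+1 ^ q *
  (\prod_(y <- s) y * q ^ sumn s * q.+1 ^ (size s * q)) <= _).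
  by rewrite big_cons mulSn !expnD eq_leq //; ring.
apply: leq_trans (leq_mul (balanced_factor q x) IHs) _.
by rewrite mulSn !expnD eq_leq //; ring.
Qed.

Lemma prod_le_balanced q r (s : seq nat) :
  0 < q -> r <= size s -> sumn s <= size s * q + r ->
  \prod_(x <- s) x <= q ^ (size s - r) * q.+1 ^ r.
Proof.
move=> q_gt0 le_r_s le_sum; set m := size s; set S := sumn s.
set d := m * q + r - S.
have eq_r : r + m * q = S + d by rewrite /d; lia.
have eq_q : m * q.+1 = S + d + (m - r) by rewrite mulnS /d; lia.
have L_gt0 : 0 < q ^ S * q.+1 ^ (m * q) by rewrite muln_gt0 !expn_gt0 q_gt0.
rewrite -(leq_pmul2r L_gt0) mulnA; apply: leq_trans (prod_balanced_factor q s) _.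
have le_d : q ^ d <= q.+1 ^ d by case: (d) => [|d']; rewrite ?expn0 ?leq_exp2r ?leqnSn.
apply: leq_trans (_ : q.+1 ^ S * q ^ S * q ^ (m - r) * q ^ d <= _).
  by rewrite eq_q !expnD eq_leq //; ring.
apply: leq_trans (leq_mul (leqnn _) le_d) _.
apply: eq_leq; transitivity (q ^ (m - r) * q ^ S * q.+1 ^ (S + d)); first by rewrite expnD; ring.
by rewrite -eq_r expnD; ring.
Qed.

Lemma max_prod_le_balanced m n : 0 < m -> m <= n ->
  max_prod m n <= (n %/ m) ^ (m - n %% m) * (n %/ m).+1 ^ (n %% m).
Proof.
have [s [<- sum_s ->]] := max_prod_witness m n; move=> s_gt0 le_sn.
apply: prod_le_balanced.
- by rewrite divn_gt0.
- by rewrite ltnW // ltn_pmod.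
- by rewrite mulnC -divn_eq.
Qed.

Lemma card_bigcup_le (T I : finType) (B : {pred I}) (S : I -> {set T}) :
  #|\bigcup_(i in B) S i| <= \sum_(i in B) #|S i|.
Proof.
elim/big_rec2: _ => [|i k A _ le_Ak]; first by rewrite cards0.
by apply: leq_trans (leq_card_setU _ _) _; rewrite leq_add2l.
Qed.

Section Cliques.
Variables (T : finType) (adj : rel T).
Hypothesis adj_sym : symmetric adj.

Definition is_clique (Q : {set T}) :=
  [forall x in Q, forall y in Q, (x != y) ==> adj x y].

Definition cliques (V : {set T}) m :=
  [set Q : {set T} | [&& Q \subset V, #|Q| == m & is_clique Q]].

Definition nbhd (V : {set T}) v := [set y in V | (y != v) && adj v y].

Lemma is_cliqueP (Q : {set T}) :
  reflect {in Q &, forall x y, x != y -> adj x y} (is_clique Q).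
Proof.
apply: (iffP forall_inP) => [cQ x y xQ yQ|cQ x xQ].
  by move: (cQ x xQ) => /forall_inP/(_ y yQ)/implyP.
by apply/forall_inP => y yQ; apply/implyP; apply: cQ.
Qed.

Lemma cliques_nbhd_setU1 (V R : {set T}) v m :
  v \in V -> R \in cliques (nbhd V v) m -> v |: R \in cliques V m.+1.
Proof.
move=> vV; rewrite !inE => /and3P[sRN /eqP <- /is_cliqueP cR].
have RN y : y \in R -> [&& y \in V, y != v & adj v y].
  by move/(subsetP sRN); rewrite inE.
have sRV : R \subset V by apply/subsetP => y /RN /andP[].
have vR : v \notin R by apply/negP => /RN; rewrite eqxx andbF.
rewrite subUset sub1set vV sRV cardsU1 vR eqxx /=.
apply/is_cliqueP => x y; rewrite !inE.
case/predU1P => [->|xR]; case/predU1P => [->|yR]; rewrite ?eqxx // => ne.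
- by case/and3P: (RN y yR).
- by rewrite adj_sym; case/and3P: (RN x xR).
- exact: cR.
Qed.

Lemma cliques_nbhd_free (V : {set T}) v m :
  v \in V -> cliques V m.+1 = set0 -> cliques (nbhd V v) m = set0.
Proof.
move=> vV free; apply/eqP; rewrite -subset0; apply/subsetP => R.
by move/(cliques_nbhd_setU1 vV); rewrite free inE.
Qed.

Lemma cliques_setD1 (V Q : {set T}) v m :
  Q \in cliques V m.+1 -> v \in Q -> Q :\ v \in cliques (nbhd V v) m.
Proof.
rewrite !inE => /and3P[sQV /eqP cQ /is_cliqueP qQ] vQ; apply/and3P; split.
- apply/subsetP => y; rewrite !inE => /andP[ne yQ].
  by rewrite (subsetP sQV) //= ne qQ // eq_sym.
- by move: cQ; rewrite (cardsD1 v) vQ add1n => -[->].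
- by apply/is_cliqueP => y z /setD1P[_ yQ] /setD1P[_ zQ]; apply: qQ.
Qed.

Lemma clique_notin_nbhd (V Q : {set T}) x m :
  x \in V -> cliques V m.+2 = set0 -> Q \in cliques V m.+1 ->
  exists2 v, v \in Q & v \notin nbhd V x.
Proof.
move=> xV free cQ; apply/exists_inP; rewrite -negb_forall_in.
apply/negP => /forall_inP sQN.
have : Q \in cliques (nbhd V x) m.+1.
  by move: cQ; rewrite !inE => /and3P[_ -> ->]; rewrite !andbT; apply/subsetP.
by move/(cliques_nbhd_setU1 xV); rewrite free inE.
Qed.

Lemma card_cliques_le_max_prod m (V : {set T}) :
  cliques V m.+1 = set0 -> #|cliques V m| <= max_prod m #|V|.
Proof.
elim: m V => [|m IHm] V free.
  apply: leq_trans (_ : #|[set set0 : {set T}]| <= 1); last by rewrite cards1.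
  apply/subset_leq_card/subsetP => Q; rewrite !inE => /and3P[_ /eqP/cards0_eq -> _].
  exact: eqxx.
have [V0|[x0 x0V]] := set_0Vmem V.
  rewrite V0 cards0; apply: leq_trans (_ : #|(set0 : {set {set T}})| <= _); last by rewrite cards0.
  apply/subset_leq_card/subsetP => Q; rewrite !inE subset0 => /and3P[/eqP ->].
  by rewrite cards0.
pose x := [arg max_(x > x0 in V) #|nbhd V x|].
have [xV max_x] : x \in V /\ forall v, v \in V -> #|nbhd V v| <= #|nbhd V x|.
  by rewrite /x; case: arg_maxnP.
set A := nbhd V x.
have sAV : A \subset V by apply/subsetP => y; rewrite inE => /andP[].
have cover : cliques V m.+1 \subset
    \bigcup_(v in V :\: A) [set v |: R | R in cliques (nbhd V v) m].
  apply/subsetP => Q cQ; have [v vQ vA] := clique_notin_nbhd xV free cQ.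
  have vV : v \in V by move: cQ; rewrite inE => /and3P[/subsetP->].
  apply/bigcupP; exists v; first by rewrite inE vA.
  by apply/imsetP; exists (Q :\ v); rewrite ?setD1K ?cliques_setD1.
apply: leq_trans (subset_leq_card cover) _.
apply: leq_trans (card_bigcup_le _ _) _.
apply: leq_trans (_ : \sum_(v in V :\: A) max_prod m #|A| <= _).
  apply: leq_sum => v /setDP[vV _].
  apply: leq_trans (leq_imset_card _ _) _.
  apply: leq_trans (IHm _ (cliques_nbhd_free vV free)) _.
  exact: leq_max_prod (max_x v vV).
rewrite sum_nat_const cardsD (setIidPr sAV).
by apply: max_prodS_ge; apply: subset_leq_card.
Qed.
End Cliques.

Lemma card_le2_pigeon (T : finType) (C : {set T}) x y z :
  #|C| <= 2 -> x \in C -> y \in C -> z \in C -> [\/ x = y, x = z | y = z].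
Proof.
move=> le2 xC yC zC.
have [->|nxy] := eqVneq x y; first by constructor 1.
have [->|nxz] := eqVneq x z; first by constructor 2.
have [->|nyz] := eqVneq y z; first by constructor 3.
suff : 3 <= #|C| by rewrite leqNgt ltnS le2.
apply: leq_trans (subset_leq_card (_ : [set x; y; z] \subset C)).
  by rewrite setUC cardsU1 !inE cards2 nxy ![z == _]eq_sym (negbTE nxz) (negbTE nyz).
by apply/subsetP => w; rewrite !inE => /orP[/orP[]|] /eqP->.
Qed.

Section TwoCNF.
Variables (n : nat) (F : cnf n).
Hypothesis F2 : is_kcnf 2 F.

Definition median (a1 a2 a3 : assignment n) : assignment n :=
  (a1 :&: a2) :|: (a1 :&: a3) :|: (a2 :&: a3).

Lemma lit_sat_median a1 a2 a3 l :
  [|| lit_sat a1 l && lit_sat a2 l, lit_sat a1 l && lit_sat a3 l | lit_sat a2 l && lit_sat a3 l] ->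
  lit_sat (median a1 a2 a3) l.
Proof.
by rewrite /lit_sat !inE; case: (_ \in a1) (_ \in a2) (_ \in a3) l.2 => [] [] [] [].
Qed.

Lemma median_sat a1 a2 a3 :
  cnf_sat a1 F -> cnf_sat a2 F -> cnf_sat a3 F -> cnf_sat (median a1 a2 a3) F.
Proof.
move=> /forall_inP s1 /forall_inP s2 /forall_inP s3; apply/forall_inP => C CF.
have [l1 l1C e1] := exists_inP (s1 C CF); have [l2 l2C e2] := exists_inP (s2 C CF).
have [l3 l3C e3] := exists_inP (s3 C CF).
have le2 : #|C| <= 2 by move/forall_inP: F2; apply.
apply/exists_inP; move: e1 e2 e3.
case: (card_le2_pigeon le2 l1C l2C l3C) => <- e1 e2 e3;
  [exists l1 | exists l1 | exists l2] => //; apply: lit_sat_median;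
  by rewrite ?e1 ?e2 ?e3 ?orbT.
Qed.

Definition cofalse (i j : 'I_n) :=
  [exists a : assignment n, [&& cnf_sat a F, i \notin a & j \notin a]].

Lemma cofalse_sym : symmetric cofalse.
Proof.
by move=> i j; apply/existsP/existsP => -[a /and3P[sa ia ja]]; exists a; rewrite sa ia ja.
Qed.

Lemma common_falsifier k (I : {set 'I_n}) :
  #|I| = k.+2 -> {in I &, forall i j, i != j -> cofalse i j} ->
  exists2 a, cnf_sat a F & I \subset ~: a.
Proof.
elim: k I => [|k IHk] I cI cofI.
  have /cards2P[i [j [nij eq_I]]] : #|I| == 2 by rewrite cI.
  rewrite eq_I in cofI *.
  have /existsP[a /and3P[sa ia ja]] : cofalse i j by apply: cofI; rewrite ?inE ?eqxx ?orbT.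
  by exists a => //; apply/subsetP => y; rewrite !inE => /orP[] /eqP->.
have /card_gt2P[i1 [i2 [i3 [[i1I i2I i3I] [n12 n23 n31]]]]] : 2 < #|I| by rewrite cI.
have IH_at j : j \in I -> exists2 a, cnf_sat a F & I :\ j \subset ~: a.
  move=> jI; apply: IHk; first by move: cI; rewrite (cardsD1 j) jI add1n => -[].
  by move=> x y /setD1P[_ xI] /setD1P[_ yI]; apply: cofI.
have [a1 s1 f1] := IH_at i1 i1I; have [a2 s2 f2] := IH_at i2 i2I.
have [a3 s3 f3] := IH_at i3 i3I.
exists (median a1 a2 a3); first exact: median_sat.
apply/subsetP => y yI; rewrite !inE.
have not_in (j : 'I_n) (a : assignment n) : I :\ j \subset ~: a -> y != j -> (y \in a) = false.
  by move=> /subsetP/(_ y) + ne; rewrite !inE ne yI => /(_ isT)/negbTE.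
have [y1|ny1] := eqVneq y i1.
  have ny2 : y != i2 by rewrite y1.
  have ny3 : y != i3 by rewrite y1 eq_sym.
  by rewrite (not_in _ _ f2 ny2) (not_in _ _ f3 ny3) !andbF.
have [y2|ny2] := eqVneq y i2.
  have ny3 : y != i3 by rewrite y2.
  by rewrite (not_in _ _ f1 ny1) (not_in _ _ f3 ny3) !andbF.
by rewrite (not_in _ _ f1 ny1) (not_in _ _ f2 ny2).
Qed.

Lemma card_sat_le_cliques t : #|sat_t t F| <= #|cliques cofalse setT (n - t)|.
Proof.
have inj_C : {in sat_t t F &, injective (fun a : assignment n => ~: a)}.
  by move=> a b _ _; apply: setC_inj.
rewrite -(card_in_imset inj_C); apply/subset_leq_card/subsetP => _ /imsetP[a + ->].
rewrite !inE => /andP[/eqP ca sa].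
rewrite subsetT [#|~: a|]cardsCs setCK card_ord ca eqxx /=.
apply/is_cliqueP => i j; rewrite !inE => ia ja _; apply/existsP; exists a.
by rewrite sa ia ja.
Qed.

Lemma cofalse_cliques_free t :
  t < n -> admissible t F -> cliques cofalse setT (n - t).+1 = set0.
Proof.
move=> lt_tn /forallP adm; apply/eqP; rewrite -subset0; apply/subsetP => Q.
rewrite !inE => /and3P[_ /eqP cQ /is_cliqueP cofQ].
have cQ2 : #|Q| = (n - t).-1.+2 by rewrite cQ; lia.
have [a sa sQa] := common_falsifier cQ2 cofQ.
have := implyP (adm a) sa; have := subset_leq_card sQa.
by rewrite [#|~: a|]cardsCs setCK card_ord cQ; lia.
Qed.
End TwoCNF.

Section ResidueCNF.
Variables (n m : nat).
Hypothesis m_gt0 : 0 < m.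

Definition residue_cnf : cnf n :=
  [set [set (i, true); (j, true)]
    | i : 'I_n, j : 'I_n in [pred j | (i != j) && (i %% m == j %% m)]].

Lemma residue_cnf_2cnf : is_kcnf 2 residue_cnf.
Proof.
by apply/forall_inP => _ /imset2P[i j _ _ ->]; rewrite cards2; case: (_ != _).
Qed.

Lemma residue_cnf_satP (a : assignment n) :
  reflect {in ~: a &, injective (fun i : 'I_n => i %% m)} (cnf_sat a residue_cnf).
Proof.
apply: (iffP forall_inP) => [sa i j ia ja eq_ij | inj _ /imset2P[i j _ + ->]].
  apply/eqP/negPn/negP => nij.
  have /sa/exists_inP[l] : [set (i, true); (j, true)] \in residue_cnf.
    by apply/imset2P; exists i j; rewrite ?inE /= ?nij ?eq_ij ?eqxx.
  rewrite /lit_sat !inE in ia ja *.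
  by case/orP => /eqP-> /=; rewrite ?(negbTE ia) ?(negbTE ja).
rewrite inE => /andP[nij /eqP eq_ij]; apply/exists_inP.
have [ia|ia] := boolP (i \in a); first by exists (i, true); rewrite ?inE ?eqxx // /lit_sat ia.
have [ja|ja] := boolP (j \in a); first by exists (j, true); rewrite ?inE ?eqxx ?orbT // /lit_sat ja.
by rewrite (inj i j) ?inE ?eqxx in nij.
Qed.

Lemma residue_cnf_admissible : admissible (n - m) residue_cnf.
Proof.
apply/forallP => a; apply/implyP => /residue_cnf_satP inj.
pose res (i : 'I_n) : 'I_m := Ordinal (ltn_pmod i m_gt0).
have inj_res : {in ~: a &, injective res} by move=> i j ia ja /(congr1 val); apply: inj.
have := max_card [set res i | i in ~: a]; rewrite card_in_imset // card_ord.
by rewrite [#|~: a|]cardsCs setCK card_ord; lia.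
Qed.

Hypothesis le_mn : m <= n.
Let q := n %/ m.
Let r := n %% m.

(* The variables of residue class [k] are the [k + m * y] with [y] in [quot_range k]. *)
Definition quot_range (k : 'I_m) : {set 'I_q.+1} := if k < r then setT else [set~ ord_max].

Lemma card_family_quot_range : #|family quot_range| = q ^ (m - r) * q.+1 ^ r.
Proof.
rewrite card_family foldrE big_map big_enum /=.
rewrite (eq_bigr (fun k : 'I_m => if k < r then q.+1 else q)); last first.
  by move=> k _; rewrite /quot_range; case: ifP; rewrite ?cardsT ?cardsC1 card_ord.
rewrite -(big_mkord xpredT (fun k => if k < r then q.+1 else q)).
rewrite (big_cat_nat (leq0n r)) /=; last by rewrite ltnW // ltn_pmod.
rewrite (eq_big_nat _ _ (F2 := fun _ => q.+1)); last by move=> k /andP[_ ->].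
rewrite [X in _ * X](eq_big_nat _ _ (F2 := fun _ => q)); last first.
  by move=> k /andP[le_rk _]; rewrite ltnNge le_rk.
by rewrite !prod_nat_const_nat subn0 mulnC.
Qed.

Lemma residue_index_lt (psi : {ffun 'I_m -> 'I_q.+1}) (k : 'I_m) :
  psi \in family quot_range -> k + m * psi k < n.
Proof.
move/familyP/(_ k); rewrite /quot_range (divn_eq n m) -/q -/r.
have lt_km := ltn_ord k; have le_psi_q : psi k <= q by rewrite -ltnS.
case: ifP => [lt_kr _|_]; first by nia.
rewrite !inE -val_eqE /= => ne_psi_q.
have lt_psi_q : psi k < q by rewrite ltn_neqAle ne_psi_q.
nia.
Qed.

Definition residue_index (psi : {ffun 'I_m -> 'I_q.+1}) (k : 'I_m) : 'I_n :=
  insubd (widen_ord le_mn k) (k + m * psi k).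

Lemma residue_indexE psi k :
  psi \in family quot_range -> residue_index psi k = k + m * psi k :> nat.
Proof. by move=> psi_q; rewrite val_insubd residue_index_lt. Qed.

Lemma residue_index_mod psi k :
  psi \in family quot_range -> residue_index psi k %% m = k.
Proof.
by move=> psi_q; rewrite residue_indexE // addnC mulnC modnMDl modn_small.
Qed.

Lemma residue_index_mod_inj psi phi k l :
  psi \in family quot_range -> phi \in family quot_range ->
  residue_index psi k %% m = residue_index phi l %% m -> k = l.
Proof. by move=> psi_q phi_q; rewrite !residue_index_mod // => /val_inj. Qed.

Definition transversal psi : {set 'I_n} := [set residue_index psi k | k : 'I_m].

Lemma transversal_sat psi :
  psi \in family quot_range -> cnf_sat (~: transversal psi) residue_cnf.
Proof.
move=> psi_q; apply/residue_cnf_satP => i j; rewrite setCK.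
by move=> /imsetP[k _ ->] /imsetP[l _ ->] /(residue_index_mod_inj psi_q psi_q) ->.
Qed.

Lemma card_transversal psi : psi \in family quot_range -> #|transversal psi| = m.
Proof.
move=> psi_q; rewrite card_imset ?card_ord // => k l.
by move/(congr1 (fun i : 'I_n => i %% m))/(residue_index_mod_inj psi_q psi_q).
Qed.

Lemma transversal_inj : {in family quot_range &, injective transversal}.
Proof.
move=> psi phi psi_q phi_q eq_T; apply/ffunP => k.
have : residue_index psi k \in transversal phi by rewrite -eq_T; apply/imsetP; exists k.
case/imsetP=> l _ eq_kl; move: (eq_kl) => /(congr1 (fun i : 'I_n => i %% m)).
move/(residue_index_mod_inj psi_q phi_q) => eq_lk; rewrite -eq_lk in eq_kl.
move/(congr1 (@nat_of_ord n))/eqP: eq_kl.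
rewrite !residue_indexE // eqn_add2l eqn_mul2l.
by rewrite eqn0Ngt m_gt0 => /eqP/val_inj.
Qed.

Lemma card_sat_residue_cnf :
  q ^ (m - r) * q.+1 ^ r <= #|sat_t (n - m) residue_cnf|.
Proof.
have inj_C : {in family quot_range &, injective (fun psi => ~: transversal psi)}.
  by move=> psi phi psi_q phi_q /setC_inj; apply: transversal_inj.
rewrite -card_family_quot_range -(card_in_imset inj_C).
apply/subset_leq_card/subsetP => _ /imsetP[psi psi_q ->].
rewrite inE transversal_sat // andbT.
by rewrite [#|~: _|]cardsCs setCK card_ord card_transversal.
Qed.
End ResidueCNF.

Theorem theorem3 (n t : nat) :
  1 <= n -> t < n ->
  Smax n t 2 = (n %/ (n - t)) ^ (n - t - n %% (n - t)) * (n %/ (n - t)).+1 ^ (n %% (n - t)).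
Proof.
move=> _ lt_tn; have m_gt0 : 0 < n - t by rewrite subn_gt0.
have le_mn : n - t <= n := leq_subr t n.
have tE : n - (n - t) = t := subKn (ltnW lt_tn).
apply/eqP; rewrite eqn_leq; apply/andP; split.
  apply/bigmax_leqP => F /andP[adm F2].
  apply: leq_trans (max_prod_le_balanced m_gt0 le_mn).
  apply: leq_trans (card_sat_le_cliques F t) _.
  have free := cofalse_cliques_free F2 lt_tn adm.
  apply: leq_trans (card_cliques_le_max_prod (@cofalse_sym n F) free) _.
  by rewrite cardsT card_ord.
apply: leq_trans (card_sat_residue_cnf m_gt0 le_mn) _; rewrite tE.
apply: leq_bigmax_cond.
by rewrite -[t in admissible t _]tE residue_cnf_admissible // residue_cnf_2cnf.
Qed.
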